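(* Let $G$ be a connected graph with node set $V(G)$, let $N_v$ denote the set of neighbors of $v$, and let $A_1\neq\emptyset$ be the set of initially awake nodes. Define $A_0=\emptyset$ and, for $i\ge 1$, $S_i=\left(\bigcup_{v\in A_i}N_v\right)\cap\left(V(G)\setminus(A_i\cup A_{i-1})\right)$ and $A_{i+1}=S_i$. For $i\ge1$, let $v_1^{(i)},\dots,v_{|A_i|}^{(i)}$ be the elements of $A_i$ in increasing order of ID and define $S_{v_j^{(i)}}^{(i)}=N_{v_j^{(i)}}\cap\left(S_i\setminus\bigcup_{k\in[j-1]}S_{v_k^{(i)}}^{(i)}\right)$. Then for every node $v$: (1) $v$ is an actor of at most one epoch, that is, there is a unique $i$ with $v\in A_i$; and (2) $S_v^{(i)}\cap S_w^{(j)}=\emptyset$ for every node $w\neq v$, where $i$ and $j$ are the unique indices with $v\in A_i$ and $w\in A_j$.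
   Context: Nodes have unique IDs from $[n]$. The nodes of $A_i$ are called the actors of epoch $i$. *)

(* Nodes are 'I_n (IDs from [n], ordered by value). *)
From mathcomp Require Import all_boot.
Set Implicit Arguments. Unset Strict Implicit. Unset Printing Implicit Defensive.

Section Epochs.
Variables (n : nat) (e : rel 'I_n) (A1 : {set 'I_n}).

Definition nbhd (v : 'I_n) : {set 'I_n} := [set u | e v u].

Definition next_set (A Aprev : {set 'I_n}) : {set 'I_n} :=
  (\bigcup_(v in A) nbhd v) :&: ~: (A :|: Aprev).

(* epoch_pair i = (A_i, A_{i+1}), with A_0 = set0 *)
Fixpoint epoch_pair (i : nat) : {set 'I_n} * {set 'I_n} :=
  match i with
  | 0 => (set0, A1)
  | i'.+1 => let: (Ap, Ac) := epoch_pair i' in (Ac, next_set Ac Ap)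
  end.

Definition actors (i : nat) : {set 'I_n} := (epoch_pair i).1.

Definition S_epoch (i : nat) : {set 'I_n} := next_set (actors i) (actors i.-1).

(* Given S and the actors v_1 < ... < v_m, the list of the sets
   S_{v_j} = N_{v_j} \cap (S \ U_{k<j} S_{v_k}); [covered] is U_{k<j} S_{v_k}. *)
Fixpoint S_list (S : {set 'I_n}) (s : seq 'I_n) (covered : {set 'I_n})
  : seq {set 'I_n} :=
  match s with
  | [::] => [::]
  | v :: s' => let Sv := nbhd v :&: (S :\: covered) in
               Sv :: S_list S s' (covered :|: Sv)
  end.

Definition sorted_actors (i : nat) : seq 'I_n :=
  sort (fun x y : 'I_n => x <= y) (enum (actors i)).

Definition S_node (i : nat) (v : 'I_n) : {set 'I_n} :=
  nth set0 (S_list (S_epoch i) (sorted_actors i) set0)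
      (index v (sorted_actors i)).

End Epochs.

(* The epochs are the breadth-first layers grown from A_1: a neighbour of an
   actor of epoch k+1 is an actor of epoch k, k+1 or k+2.  Following an edge
   path from a node of A_1 therefore reaches every node (G is connected), and
   an induction on the epoch shows that A_i never meets an earlier A_k: if x
   lies in A_(m+2) and in some A_k with k < m, its neighbour in A_(m+1) would
   also lie in A_(k-1), A_k or A_(k+1), all earlier than m+1.  The sets S_v^(i)
   lie in A_(i+1), so two of them can only meet inside one epoch, where they
   are pairwise disjoint by construction: each one avoids the union of its
   predecessors. *)
From mathcomp Require Import all_boot.
From mathcomp Require Import zify.
Set Implicit Arguments. Unset Strict Implicit.

Section Epochs.
Variables (n : nat) (e : rel 'I_n) (A1 : {set 'I_n}).
Local Notation A := (actors e A1).

Lemma actors0 : A 0 = set0. Proof. by []. Qed.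

Lemma actorsSS k : A k.+2 = next_set e (A k.+1) (A k).
Proof. by rewrite /actors /=; case: (epoch_pair e A1 k). Qed.

Lemma S_epoch_sub_actors k : S_epoch e A1 k \subset A k.+1.
Proof.
case: k => [|k]; last by rewrite /S_epoch actorsSS.
apply/subsetP => x; rewrite /S_epoch /next_set actors0 big_set0 !inE.
by case/andP.
Qed.

Lemma actors_nbhd k x y : x \in A k.+1 -> e x y ->
  [|| y \in A k, y \in A k.+1 | y \in A k.+2].
Proof.
move=> xA exy; rewrite actorsSS /next_set !inE.
have -> : y \in \bigcup_(v in A k.+1) nbhd e v.
  by apply/bigcupP; exists x; rewrite ?inE.
by case: (y \in A k); case: (y \in A k.+1).
Qed.

Lemma actors_connect a v i : a \in A i -> connect e a v -> exists j, v \in A j.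
Proof.
move=> aA /connectP [p pth ->] {v}.
elim: p a i aA pth => [|b p IHp] a [|i] //=; rewrite ?actors0 ?inE //.
  by move=> aA; exists i.+1.
move=> aA /andP [eab pth].
by case/or3P: (actors_nbhd aA eab) => /IHp; apply.
Qed.

Hypothesis e_sym : symmetric e.

Lemma actors_disjoint i k x : k < i -> x \in A i -> x \notin A k.
Proof.
elim/ltn_ind: i k x => [[|[|m]]] IH k x //.
  by case: k => // _ _; rewrite actors0 inE.
move=> lt_k_m2; rewrite actorsSS /next_set !inE.
case/andP=> /bigcupP [y yA]; rewrite inE e_sym => exy /norP [xNm1 xNm].
apply/negP => xk.
have lt_k_m : k < m.
  have k_neq_m : k != m by apply: contraTneq xk => ->.
  have k_neq_m1 : k != m.+1 by apply: contraTneq xk => ->.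
  lia.
case: k xk {lt_k_m2} lt_k_m => [|k]; first by rewrite actors0 inE.
move=> xk lt_k_m.
by case/or3P: (actors_nbhd xk exy); apply/negP/(IH m.+1); lia.
Qed.

Lemma actors_inj x i j : x \in A i -> x \in A j -> i = j.
Proof.
move=> xi xj; case: (ltngtP i j) => // [lt_ij | lt_ji].
- by move: (actors_disjoint lt_ij xj); rewrite xi.
- by move: (actors_disjoint lt_ji xi); rewrite xj.
Qed.

Lemma S_list_sub S s cov k : nth set0 (S_list e S s cov) k \subset S.
Proof.
apply/subsetP => x.
elim: s cov k => [|v s IH] cov [|k] /=; rewrite ?nth_nil ?inE //.
- by case/andP => _ /andP [].
- exact: IH.
Qed.

Lemma S_list_nth_inj S s cov i j x :
  x \in nth set0 (S_list e S s cov) i -> x \in nth set0 (S_list e S s cov) j ->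
  i = j.
Proof.
have notin_cov s' cov' k : x \in nth set0 (S_list e S s' cov') k -> x \notin cov'.
  elim: s' cov' k => [|v s' IH] cov' [|k] /=; rewrite ?nth_nil ?inE //.
  - by case/andP => _ /andP [].
  - by move/IH; rewrite inE negb_or => /andP [].
elim: s cov i j => [|v s IH] cov [|i] [|j] //=; rewrite ?nth_nil ?in_set0 //.
- by move=> xv /notin_cov; rewrite in_setU xv orbT.
- by move=> /notin_cov; rewrite in_setU => /norP [_ /negPf ->].
- by move=> xi xj; congr _.+1; apply: IH xi xj.
Qed.

Lemma S_node_sub_actors i v : S_node e A1 i v \subset A i.+1.
Proof. exact: subset_trans (S_list_sub _ _ _ _) (S_epoch_sub_actors i). Qed.

Lemma mem_sorted_actors i v : (v \in sorted_actors e A1 i) = (v \in A i).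
Proof. by rewrite mem_sort mem_enum. Qed.

End Epochs.

Theorem lemma3 (n : nat) (e : rel 'I_n) (A1 : {set 'I_n}) :
  symmetric e -> irreflexive e -> (forall x y : 'I_n, connect e x y) ->
  A1 != set0 ->
  forall v : 'I_n,
    (exists! i : nat, v \in actors e A1 i) /\
    (forall (w : 'I_n) (i j : nat), w != v ->
       v \in actors e A1 i -> w \in actors e A1 j ->
       S_node e A1 i v :&: S_node e A1 j w = set0).
Proof.
move=> e_sym _ e_conn /set0Pn [a aA1] v; split.
  have [i vi] := actors_connect (i := 1) aA1 (e_conn a v).
  by exists i; split=> // j /(actors_inj e_sym vi).
move=> w i j w_neq_v vi wj; apply/setP => x; rewrite !inE.
apply/andP => -[xv xw].
have xi1 := subsetP (S_node_sub_actors e A1 i v) x xv.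
have xj1 := subsetP (S_node_sub_actors e A1 j w) x xw.
case: (actors_inj e_sym xi1 xj1) => eq_ij; subst j.
have := S_list_nth_inj xv xw.
move/(index_inj v); rewrite !mem_sorted_actors => /(_ vi wj) eq_vw.
by rewrite eq_vw eqxx in w_neq_v.
Qed.
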